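(* Let $H$ be a connected triangle-free graph and $G=L(H)$. Then $G$ is localizable if and only if $H$ is an equimatchable bipartite graph.
   Context: $L(H)$ is the line graph of $H$. A clique is strong if it intersects every maximal independent set; a graph is localizable if its vertex set admits a partition into strong cliques. A graph is equimatchable if all its maximal matchings have the same size. *)

From mathcomp Require Import all_boot.
Set Implicit Arguments. Unset Strict Implicit. Unset Printing Implicit Defensive.

(* A simple graph is a finType V with a symmetric irreflexive relation r. *)
Section Graphs.
Variables (V : finType) (r : rel V).

Definition connected_graph : Prop := forall x y : V, connect r x y.

Definition triangle_free : Prop :=
  forall x y z : V, ~ [&& r x y, r y z & r x z].

Definition is_clique (C : {set V}) : bool :=
  [forall x in C, forall y in C, (x != y) ==> r x y].

Definition is_indep (I : {set V}) : bool :=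
  [forall x in I, forall y in I, ~~ r x y].

Definition is_maximal_indep (I : {set V}) : bool :=
  is_indep I && [forall v, (v \notin I) ==> ~~ is_indep (v |: I)].

Definition strong_clique (C : {set V}) : bool :=
  is_clique C && [forall I : {set V}, is_maximal_indep I ==> (C :&: I != set0)].

Definition localizable : Prop :=
  exists P : {set {set V}}, partition P [set: V] /\ {in P, forall C, strong_clique C}.

Definition bipartite : Prop :=
  exists A : {set V}, forall x y, r x y -> (x \in A) != (y \in A).

Definition is_edge (S : {set V}) : bool :=
  [exists x, exists y, r x y && (S == [set x; y])].

Definition is_matching (M : {set {set V}}) : bool :=
  [forall S in M, is_edge S] &&
  [forall S in M, forall S' in M, (S != S') ==> [disjoint S & S']].

Definition is_maximal_matching (M : {set {set V}}) : bool :=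
  is_matching M &&
  [forall S : {set V}, (is_edge S && (S \notin M)) ==> ~~ is_matching (S |: M)].

Definition equimatchable : Prop :=
  forall M M' : {set {set V}}, is_maximal_matching M -> is_maximal_matching M' ->
    #|M| = #|M'|.

Definition line_vertex := {S : {set V} | is_edge S}.
Definition line_rel : rel line_vertex :=
  fun a b => (a != b) && (val a :&: val b != set0).
End Graphs.

(* In the line graph of a triangle-free graph every nonempty clique is a star, and a strong
   clique with centre c contains every edge through c (otherwise a maximal matching through
   such an edge would miss the clique).  Hence the centres of the blocks of a partition of
   L(H) into strong cliques form one side of a bipartition of H, and every maximal matching,
   being a maximal independent set of L(H), meets each block exactly once: H is equimatchable.
   Conversely, if H is connected, bipartite and equimatchable, no maximal matching leaves a
   vertex exposed on each side: along a path between two such vertices, exchanging matching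
   edges either yields a maximal matching exposing the ends of a shorter such path, or one that
   is smaller than another maximal matching.  So one side X is covered by every maximal
   matching (all have the same size), and the stars at the vertices of X are strong cliques
   partitioning L(H). *)

From mathcomp Require Import all_boot.
Set Implicit Arguments. Unset Strict Implicit. Unset Printing Implicit Defensive.

Section IndependentSets.
Variables (V : finType) (r : rel V).
Implicit Types (v w : V) (C I : {set V}) (P : {set {set V}}).

Lemma is_indepP I : reflect {in I &, forall v w, ~~ r v w} (is_indep r I).
Proof.
apply: (iffP forall_inP) => [h v w vI wI|h v vI]; first by move/forall_inP: (h v vI); apply.
by apply/forall_inP => w; apply: h.
Qed.

Lemma is_cliqueP C : reflect {in C &, forall v w, v != w -> r v w} (is_clique r C).
Proof.
apply: (iffP forall_inP) => [h v w vC wC|h v vC].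
  by move/forall_inP: (h v vC) => /(_ w wC)/implyP.
by apply/forall_inP => w wC; apply/implyP; apply: h.
Qed.

Lemma maximal_indepP I : symmetric r -> irreflexive r -> is_indep r I ->
  reflect (forall v, v \notin I -> exists2 w, w \in I & r v w) (is_maximal_indep r I).
Proof.
move=> r_sym r_irr hI; rewrite /is_maximal_indep hI.
apply: (iffP forallP) => [hmax v vI|hadj v]; last first.
  apply/implyP => vI; have [w wI rvw] := hadj v vI; apply/negP => /is_indepP h.
  by move: (h v w (setU11 _ _) (setU1r _ wI)); rewrite rvw.
apply/exists_inP; move: (hmax v); rewrite vI /=; apply: contraR => /exists_inPn nr.
apply/is_indepP; move: hI => /is_indepP hI x y /setU1P[->|xI] /setU1P[->|yI].
- by rewrite r_irr.
- exact: nr.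
- by rewrite r_sym nr.
- exact: hI.
Qed.

Lemma card_maximal_indep_strong_partition P I :
  partition P [set: V] -> {in P, forall C, strong_clique r C} -> is_maximal_indep r I ->
  #|I| = #|P|.
Proof.
move=> hP strongP hI; have /is_indepP indI := (andP hI).1.
have tP := partition_trivIset hP; have covP := cover_partition hP.
have inP v : pblock P v \in P by rewrite pblock_mem // covP inE.
have inj : {in I &, injective (pblock P)}.
  move=> v w vI wI eqvw; apply/eqP; apply: contraT => nvw.
  have /andP[/is_cliqueP clq _] := strongP _ (inP w).
  have vPw : v \in pblock P w by rewrite -eqvw mem_pblock covP inE.
  by move: (indI v w vI wI); rewrite clq // mem_pblock covP inE.
rewrite -(card_in_imset inj); apply: eq_card => C; apply/imsetP/idP => [[v _ ->//]|hC].
have /andP[_ /forallP/(_ I)] := strongP C hC; rewrite hI /= => /set0Pn[v].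
by rewrite inE => /andP[vC vI]; exists v; rewrite // (def_pblock tP hC vC).
Qed.

End IndependentSets.

Section Matchings.
Variables (T : finType) (e : rel T).
Hypotheses (e_sym : symmetric e) (e_irr : irreflexive e).
Implicit Types (M N : {set {set T}}) (S : {set T}) (x y : T).

Lemma is_edgeP S : reflect (exists x y, e x y /\ S = [set x; y]) (is_edge e S).
Proof.
apply: (iffP existsP) => [[x /existsP [y /andP [exy /eqP ->]]]|[x [y [exy ->]]]].
  by exists x, y.
by exists x; apply/existsP; exists y; rewrite exy eqxx.
Qed.

Lemma is_edge2 x y : e x y -> is_edge e [set x; y].
Proof. by move=> exy; apply/is_edgeP; exists x, y. Qed.

Lemma edge_rel S x y : is_edge e S -> x \in S -> y \in S -> x != y -> e x y.
Proof.
case/is_edgeP=> a [b [eab ->]]; rewrite !inE.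
by case/orP=> /eqP-> /orP[]/eqP->; rewrite ?eqxx // e_sym.
Qed.

Lemma edge_other S x : is_edge e S -> x \in S -> exists2 y, e x y & S = [set x; y].
Proof.
case/is_edgeP=> a [b [eab ->]]; rewrite !inE => /orP[]/eqP->; first by exists b.
by exists a; rewrite 1?e_sym // setUC.
Qed.

Lemma is_edge2_neq x y : is_edge e [set x; y] -> x != y.
Proof.
apply: contraTneq => ->; rewrite setUid; apply/negP => /is_edgeP[a [b [eab /setP hab]]].
move: (hab a) (hab b); rewrite !inE !eqxx orbT => /eqP ea /eqP eb.
by rewrite ea eb e_irr in eab.
Qed.

Lemma edge_neq0 S : is_edge e S -> S != set0.
Proof. by case/is_edgeP=> x [y [_ ->]]; apply/set0Pn; exists x; rewrite !inE eqxx. Qed.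

Lemma is_matchingE M : is_matching e M = [forall S in M, is_edge e S] && trivIset M.
Proof.
congr andb; apply/forall_inP/trivIsetP => [h S S' hS hS'|h S hS].
  by move/forall_inP: (h S hS) => /(_ S' hS')/implyP.
by apply/forall_inP=> S' hS'; apply/implyP; apply: h.
Qed.

Lemma matching_edge M S : is_matching e M -> S \in M -> is_edge e S.
Proof. by rewrite is_matchingE => /andP[/forall_inP eM _] /eM. Qed.

Lemma matching_trivIset M : is_matching e M -> trivIset M.
Proof. by rewrite is_matchingE => /andP[]. Qed.

Lemma matchingS M N : N \subset M -> is_matching e M -> is_matching e N.
Proof.
rewrite !is_matchingE => sNM /andP[/forall_inP eM tM]; rewrite (trivIsetS sNM) // andbT.
by apply/forall_inP=> S /(subsetP sNM)/eM.
Qed.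

Lemma mem_cover M S z : S \in M -> z \in S -> z \in cover M.
Proof. by move=> hS zS; apply/bigcupP; exists S. Qed.

Lemma cover_setU1 S M : cover (S |: M) = S :|: cover M.
Proof. by rewrite /cover bigcup_setU big_set1. Qed.

Lemma matching_setU1 M x y : is_matching e M -> e x y ->
  x \notin cover M -> y \notin cover M ->
  is_matching e ([set x; y] |: M) /\ [set x; y] \notin M.
Proof.
rewrite is_matchingE => /andP[/forall_inP eM tM] exy xM yM.
have M0 : set0 \notin M by apply: contra xM => /eM/edge_neq0; rewrite eqxx.
have disj S : S \in M -> [disjoint [set x; y] & S].
  move=> hS; rewrite -setI_eq0; apply/set0Pn=> -[z]; rewrite !inE => /andP[zxy zS].
  by case/orP: zxy => /eqP zE; [case/negP: xM | case/negP: yM]; rewrite -zE (mem_cover hS).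
have [tM' ->] := trivIsetU1 disj tM M0; rewrite is_matchingE tM' andbT; split=> //.
by apply/forall_inP=> S /setU1P[->|/eM//]; apply: is_edge2.
Qed.

Lemma maximal_matchingP M : is_matching e M ->
  reflect (forall x y, e x y -> (x \in cover M) || (y \in cover M))
          (is_maximal_matching e M).
Proof.
move=> hM; rewrite /is_maximal_matching hM; apply: (iffP forallP) => [hmax x y exy|hc S].
  apply: contraT; rewrite negb_or => /andP[xM yM].
  have [hM' nin] := matching_setU1 hM exy xM yM.
  by move: (hmax [set x; y]); rewrite is_edge2 // nin hM'.
apply/implyP => /andP[/is_edgeP[x [y [exy ->]]] nin].
rewrite is_matchingE negb_and; apply/orP; right; apply/trivIsetP => tM'.
have exposed z : z \in [set x; y] -> z \in cover M -> False.
  move=> zxy /bigcupP[S' hS' zS'].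
  have nS : [set x; y] != S' by apply: contraNneq nin => ->.
  by rewrite (disjointFr (tM' _ _ (setU11 _ _) (setU1r _ hS') nS) zxy) in zS'.
by case/orP: (hc x y exy); apply: exposed; rewrite !inE eqxx ?orbT.
Qed.

Lemma maximal_matching_extend N : is_matching e N ->
  exists2 M : {set {set T}}, N \subset M & is_maximal_matching e M.
Proof.
case/maxset_exists=> M /maxsetP[hM maxM] sNM; exists M => //.
apply/maximal_matchingP => // x y exy; apply: contraT; rewrite negb_or => /andP[xM yM].
have [hM' nin] := matching_setU1 hM exy xM yM.
by rewrite -(maxM _ hM' (subsetUr _ _)) setU11 in nin.
Qed.

Lemma maximal_matching_exists : exists M : {set {set T}}, is_maximal_matching e M.
Proof.
have [|M _ hM] := @maximal_matching_extend set0; last by exists M.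
by apply/andP; split; apply/forall_inP => S; rewrite inE.
Qed.

Lemma maximal_matching_matching M : is_maximal_matching e M -> is_matching e M.
Proof. by case/andP. Qed.

Lemma matching_contract M p q p' r :
  is_matching e M -> [set p; q] \in M -> [set p'; r] \in M ->
  [set p; q] != [set p'; r] -> e p p' ->
  exists2 N : {set {set T}}, is_matching e N /\ #|N| < #|M| & cover N = cover M :\ q :\ r.
Proof.
move=> hM hS1 hS2 nS epp'; have tM := matching_trivIset hM.
have disj := trivIsetP tM _ _ hS1 hS2 nS.
have pr : p \notin [set p'; r] by rewrite (disjointFr disj) // !inE eqxx.
have p'q : p' \notin [set p; q] by rewrite (disjointFl disj) // !inE eqxx.
have pM := mem_cover hS1 (setU11 p _); have p'M := mem_cover hS2 (setU11 p' _).
have hS2' : [set p'; r] \in M :\ [set p; q] by rewrite !inE eq_sym nS.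
have hMD : is_matching e (M :\ [set p; q]) := matchingS (subsetDl _ _) hM.
have hMDD : is_matching e (M :\ [set p; q] :\ [set p'; r]) := matchingS (subsetDl _ _) hMD.
exists ([set p; p'] |: (M :\ [set p; q] :\ [set p'; r])); first split.
- apply: (proj1 (matching_setU1 hMDD epp' _ _));
    by rewrite coverD1 ?matching_trivIset // coverD1 // !inE ?eqxx ?andbF.
- rewrite cardsU1 (cardsD1 [set p; q] M) hS1 (cardsD1 [set p'; r] (M :\ _)) hS2'.
  by case: (_ \notin _).
rewrite cover_setU1 coverD1 ?matching_trivIset // coverD1 //; apply/setP=> z; rewrite !inE.
move: pr p'q; rewrite !inE !negb_or => /andP[_ pr] /andP[_ p'q].
case: (eqVneq z p) => [->|_]; first by rewrite pM (is_edge2_neq (matching_edge hM hS1)) pr.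
case: (eqVneq z p') => [->|_]; first by rewrite p'M (is_edge2_neq (matching_edge hM hS2)) p'q.
by rewrite /= andbA.
Qed.

Definition never_coexposed x y :=
  forall M, is_maximal_matching e M -> (x \in cover M) || (y \in cover M).

Lemma edge_never_coexposed x y : e x y -> never_coexposed x y.
Proof. by move=> exy M hM; apply: (elimT (maximal_matchingP (maximal_matching_matching hM))). Qed.

Section Equimatchable.
Hypothesis eqm : equimatchable e.

Lemma matching_small_exposed_edge M N :
  is_maximal_matching e M -> is_matching e N -> #|N| < #|M| ->
  exists x y, [/\ e x y, x \notin cover N & y \notin cover N].
Proof.
move=> hM hN ltNM.
have nmaxN : ~~ is_maximal_matching e N by apply: contraTN ltNM => /eqm/(_ hM)->; rewrite ltnn.
case/boolP: [exists x, exists y, [&& e x y, x \notin cover N & y \notin cover N]].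
  by case/existsP=> x /existsP[y /and3P[]]; exists x, y.
move/existsPn=> hxy; case/negP: nmaxN; apply/maximal_matchingP => // x y exy.
apply: contraT; rewrite negb_or => /andP[xN yN].
by move/existsPn: (hxy x) => /(_ y); rewrite exy xN yN.
Qed.

Lemma equimatchable_maximal M N :
  is_maximal_matching e M -> is_matching e N -> #|N| = #|M| -> is_maximal_matching e N.
Proof.
move=> hM hN NM; have [N' sNN' hN'] := maximal_matching_extend hN.
suff -> : N = N' by [].
by apply/eqP; rewrite eqEcard sNN' (eqm hN' hM) NM /=.
Qed.

Lemma exchange_maximal M x p q :
  is_maximal_matching e M -> [set p; q] \in M -> e x p -> x \notin cover M ->
  exists M1 : {set {set T}}, [/\ is_maximal_matching e M1, M :\ [set p; q] \subset M1
                                 & cover M1 = x |: (cover M :\ q)].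
Proof.
move=> hM hpq exp xM; have hM0 := maximal_matching_matching hM.
have tM := matching_trivIset hM0.
have pM : p \in cover M by apply: mem_cover hpq _; rewrite !inE eqxx.
have pq := is_edge2_neq (matching_edge hM0 hpq).
have [hM1 nin] : is_matching e ([set x; p] |: (M :\ [set p; q])) /\
                 [set x; p] \notin M :\ [set p; q].
  apply: matching_setU1 (matchingS (subsetDl _ _) hM0) _ _ _ => //;
    by rewrite coverD1 // !inE ?(negbTE xM) ?eqxx ?andbF.
exists ([set x; p] |: (M :\ [set p; q])); split.
- by apply: equimatchable_maximal hM hM1 _; rewrite cardsU1 nin (cardsD1 [set p; q] M) hpq.
- exact: subsetUr.
rewrite cover_setU1 coverD1 //; apply/setP=> z; rewrite !inE.
by case: (eqVneq z p) => [->|_] /=; rewrite ?eqxx ?pM ?pq ?orbT ?orbF.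
Qed.

(* The contracted matching is smaller than M, hence not maximal. *)
Lemma contract_exposed_neighbour M p q p' r :
  is_maximal_matching e M -> [set p; q] \in M -> [set p'; r] \in M ->
  [set p; q] != [set p'; r] -> e p p' ->
  [\/ e q r, exists2 z, z \notin cover M & e q z | exists2 z, z \notin cover M & e r z].
Proof.
move=> hM hS1 hS2 nS epp'.
have [N [hN ltNM] covN] := matching_contract (maximal_matching_matching hM) hS1 hS2 nS epp'.
have [a [b [eab aN bN]]] := matching_small_exposed_edge hM hN ltNM.
have exposedN z : z \notin cover N -> [\/ z = q, z = r | z \notin cover M].
  rewrite covN !inE; case: (eqVneq z q) => [->|_]; first by constructor.
  by case: (eqVneq z r) => [->|_ /= zM]; [constructor|constructor 3].
move: eab; case: (exposedN a aN) => [->|->|aM]; case: (exposedN b bN) => [->|->|bM];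
  rewrite ?e_irr // => eab.
- by constructor 1.
- by constructor 2; exists b.
- by constructor 1; rewrite e_sym.
- by constructor 3; exists b.
- by constructor 2; exists a; rewrite // e_sym.
- by constructor 3; exists a; rewrite // e_sym.
- by move: (edge_never_coexposed eab hM); rewrite (negbTE aM) (negbTE bM).
Qed.

Section Bipartition.
Variable A : {set T}.
Hypothesis hA : forall x y, e x y -> (x \in A) != (y \in A).

Lemma side_flip x y : e x y -> (y \in A) = (x \notin A).
Proof. by move/hA; case: (x \in A); case: (y \in A). Qed.

Lemma never_coexposed_step x p p' y : x \in A -> y \notin A -> e x p -> e p p' ->
  never_coexposed p' y -> never_coexposed x y.
Proof.
move=> xA yA exp epp' nc M hM; apply/contraT => /norP[xM yM]; exfalso.
have hM0 := maximal_matching_matching hM.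
have pA : p \notin A by rewrite (side_flip exp) xA.
have /bigcupP[S1 hS1 pS1] : p \in cover M.
  by move: (edge_never_coexposed exp hM); rewrite (negbTE xM).
have [q epq ?] := edge_other (matching_edge hM0 hS1) pS1; subst S1.
have qM : q \in cover M by rewrite (mem_cover hS1) // !inE eqxx orbT.
have qA : q \in A by rewrite (side_flip epq) pA.
have [M1 [hM1 sM1 covM1]] := exchange_maximal hM hS1 exp xM.
have qM1 : q \notin cover M1 by rewrite covM1 !inE eqxx /= orbF; apply: contraNneq xM => <-.
have yM1 : y \notin cover M1.
  by rewrite covM1 !inE (negbTE yM) andbF orbF; apply: contraNneq yA => ->.
have [p'q|p'q] := eqVneq p' q.
  by move: (nc M1 hM1); rewrite p'q (negbTE qM1) (negbTE yM1).
have p'A : p' \in A by rewrite (side_flip epp') pA.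
have /bigcupP[S2 hS2 p'S2] : p' \in cover M by move: (nc M hM); rewrite (negbTE yM) orbF.
have [r ep'r ?] := edge_other (matching_edge hM0 hS2) p'S2; subst S2.
have rA : r \notin A by rewrite (side_flip ep'r) p'A.
have nS : [set p; q] != [set p'; r].
  apply/eqP => S12; move: (setU11 p' [set r]); rewrite -S12 !inE (negbTE p'q) orbF => /eqP p'p.
  by rewrite p'p e_irr in epp'.
(* M1 already exposes q and z; otherwise exchanging p'r for qr in M1, or for zr in M, gives a
   maximal matching exposing p' and y. *)
case: (contract_exposed_neighbour hM hS1 hS2 nS epp') => [eqr|[z zM eqz]|[z zM erz]].
- have hS2M1 : [set r; p'] \in M1 by rewrite (subsetP sM1) // setUC !inE eq_sym nS.
  have [M4 [hM4 _ covM4]] := exchange_maximal hM1 hS2M1 eqr qM1.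
  move: (nc M4 hM4); rewrite covM4 !inE eqxx (negbTE p'q) (negbTE yM1) !andbF !orbF.
  by apply/negP; apply: contraNneq yA => ->.
- have zA : z \notin A by rewrite (side_flip eqz) qA.
  move: (edge_never_coexposed eqz hM1); rewrite (negbTE qM1) covM1 !inE (negbTE zM) andbF orbF.
  by apply/negP; apply: contraNneq zA => ->.
- have zA : z \in A by rewrite (side_flip erz) rA.
  have hS2' : [set r; p'] \in M by rewrite setUC.
  have ezr : e z r by rewrite e_sym.
  have [M3 [hM3 _ covM3]] := exchange_maximal hM hS2' ezr zM.
  move: (nc M3 hM3); rewrite covM3 !inE eqxx (negbTE yM) !andbF !orbF.
  case/orP=> /eqP zE; last by rewrite -zE (negbTE yA) in zA.
  by case/negP: zM; rewrite -zE (mem_cover hS2) // !inE eqxx.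
Qed.

Lemma path_never_coexposed x s : path e x s -> x \in A -> last x s \notin A ->
  never_coexposed x (last x s).
Proof.
have [n] := ubnP (size s); elim: n x s => // n IHn x [|p [|p' s]] /=.
- by move=> _ _ ->.
- by rewrite andbT => _ exp _ _; apply: edge_never_coexposed.
move=> /ltnSE sz /and3P[exp epp' hs] xA sA.
apply: (never_coexposed_step xA sA exp epp'); apply: IHn => //.
  exact: ltnW.
by rewrite (side_flip epp') (side_flip exp) xA.
Qed.

Lemma maximal_matching_covers_side M : connected_graph e -> is_maximal_matching e M ->
  A \subset cover M \/ ~: A \subset cover M.
Proof.
move=> hc hM; have [|/subsetPn[a aA aM]] := boolP (A \subset cover M); first by left.
right; apply/subsetP=> b; rewrite inE => bA; apply: contraT => bM.
case/connectP: (hc a b) => s hs bE; rewrite bE in bA bM.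
by move: (path_never_coexposed hs aA bA hM); rewrite (negbTE aM) (negbTE bM).
Qed.

Lemma card_side_cover M : is_matching e M -> #|A :&: cover M| = #|M|.
Proof.
move=> hM; rewrite -sum1_card (eq_bigl (fun x => (x \in cover M) && (x \in A))) => [|x]; last first.
  by rewrite inE andbC.
rewrite big_trivIset_cond ?matching_trivIset // -sum1_card; apply: eq_bigr => S hS.
case/is_edgeP: (matching_edge hM hS) => a [b [eab ->]].
rewrite big_mkcondr big_setU1 ?inE ?is_edge2_neq ?is_edge2 // big_set1.
by move: (hA eab); case: (a \in A); case: (b \in A).
Qed.

Lemma side_covered_by_all M N : is_maximal_matching e M -> is_maximal_matching e N ->
  A \subset cover M -> A \subset cover N.
Proof.
move=> hM hN /setIidPl AM; apply/setIidPl/eqP; rewrite setIC eqEcard subsetIr /=.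
rewrite setIC card_side_cover ?maximal_matching_matching // (eqm hN hM).
by rewrite -card_side_cover ?maximal_matching_matching // AM.
Qed.

End Bipartition.

Lemma equimatchable_covered_side : connected_graph e -> bipartite e ->
  exists X : {set T}, (forall x y, e x y -> (x \in X) != (y \in X)) /\
                      forall M, is_maximal_matching e M -> X \subset cover M.
Proof.
move=> hc [A hA]; have [M0 hM0] := maximal_matching_exists.
have hAC x y : e x y -> (x \in ~: A) != (y \in ~: A).
  by move/hA; rewrite !inE; case: (x \in A); case: (y \in A).
case: (maximal_matching_covers_side hA hc hM0) => AM.
- by exists A; split=> // M hM; exact: (side_covered_by_all hA hM0 hM AM).
- by exists (~: A); split=> // M hM; exact: (side_covered_by_all hAC hM0 hM AM).
Qed.

End Equimatchable.
End Matchings.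

Section LineGraph.
Variables (T : finType) (e : rel T).
Hypotheses (e_sym : symmetric e) (e_irr : irreflexive e).
Local Notation L := (@line_rel T e).
Implicit Types (v w : line_vertex e) (C I : {set line_vertex e}) (M : {set {set T}}).

Lemma line_relP v w :
  reflect (v != w /\ exists2 z, z \in val v & z \in val w) (L v w).
Proof.
apply: (iffP andP) => [[nvw /set0Pn[z]]|[nvw [z zv zw]]].
  by rewrite inE => /andP[zv zw]; split=> //; exists z.
by split=> //; apply/set0Pn; exists z; rewrite inE zv.
Qed.

Lemma line_rel_sym : symmetric L.
Proof. by move=> v w; rewrite /line_rel eq_sym setIC. Qed.

Lemma line_rel_irr : irreflexive L.
Proof. by move=> v; rewrite /line_rel eqxx. Qed.

Lemma indep_matching I : is_indep L I -> is_matching e (val @: I).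
Proof.
move/is_indepP=> hI; rewrite is_matchingE; apply/andP; split.
  by apply/forall_inP => _ /imsetP[v _ ->]; apply: valP.
apply/trivIsetP => _ _ /imsetP[v vI ->] /imsetP[w wI ->] nvw.
rewrite -setI_eq0; apply: contraR (hI v w vI wI) => meet.
by rewrite /line_rel meet andbT; apply: contraNneq nvw => ->.
Qed.

Lemma matching_indep M : is_matching e M -> is_indep L (val @^-1: M).
Proof.
move=> hM; apply/is_indepP => v w; rewrite !inE => vM wM; apply/line_relP => -[nvw [z zv zw]].
have tM := matching_trivIset hM.
by move: nvw; rewrite -(inj_eq val_inj) -(def_pblock tM vM zv) (def_pblock tM wM zw) eqxx.
Qed.

Lemma card_matching_preim M :
  is_matching e M -> #|val @^-1: M : {set line_vertex e}| = #|M|.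
Proof.
move=> hM; rewrite -(card_imset (val @^-1: M) val_inj); apply: eq_card => S.
apply/imsetP/idP => [[v] |SM]; first by rewrite inE => vM ->.
by exists (exist _ S (matching_edge hM SM)); rewrite ?inE.
Qed.

Lemma maximal_matching_indep M :
  is_maximal_matching e M -> is_maximal_indep L (val @^-1: M).
Proof.
move=> hM; have hM0 := maximal_matching_matching hM.
apply/(maximal_indepP line_rel_sym line_rel_irr (matching_indep hM0)) => v; rewrite inE => vM.
case/is_edgeP: (valP v) => x [y [exy vxy]].
have [z zv /bigcupP[S SM zS]] : exists2 z, z \in val v & z \in cover M.
  move: (elimT (maximal_matchingP hM0) hM x y exy).
  by rewrite vxy; case/orP=> ?; [exists x | exists y]; rewrite // !inE eqxx ?orbT.
exists (exist _ S (matching_edge hM0 SM)); rewrite ?inE //; apply/line_relP; split.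
  by apply: contraNneq vM => ->.
by exists z.
Qed.

Lemma maximal_indep_matching I :
  is_maximal_indep L I -> is_maximal_matching e (val @: I).
Proof.
move=> hI; have hI0 := (andP hI).1; have hN := indep_matching hI0.
apply/maximal_matchingP => // x y exy.
pose v : line_vertex e := exist _ [set x; y] (is_edge2 exy).
have [z zv cz] : exists2 z, z \in [set x; y] & z \in cover (val @: I).
  have [vI|/(elimT (maximal_indepP line_rel_sym line_rel_irr hI0) hI)[w wI]] := boolP (v \in I).
    by exists x; rewrite ?inE ?eqxx // (mem_cover (imset_f val vI)) // !inE eqxx.
  by case/line_relP=> _ [z zv zw]; exists z; rewrite // (mem_cover (imset_f val wI)).
by move: zv cz; rewrite !inE => /orP[]/eqP-> ->; rewrite ?orbT.
Qed.

Lemma line_clique_star C : triangle_free e -> is_clique L C -> C != set0 ->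
  exists c, {in C, forall v, c \in val v}.
Proof.
move=> tf /is_cliqueP clq /set0Pn[v0 v0C].
have meet_v0 w a b : w \in C -> val v0 = [set a; b] -> a \notin val w -> b \in val w.
  move=> wC v0ab aw; have nv : v0 != w by apply: contraNneq aw => <-; rewrite v0ab !inE eqxx.
  case/line_relP: (clq _ _ v0C wC nv) => _ [z]; rewrite v0ab !inE.
  by case/orP=> /eqP-> //; rewrite (negbTE aw).
case/is_edgeP: (valP v0) => x [y [exy v0xy]].
have [/forall_inP hx|] := boolP [forall v in C, x \in val v]; first by exists x.
have [/forall_inP hy|] := boolP [forall v in C, y \in val v]; first by exists y.
rewrite !negb_forall_in => /exists_inP[w2 w2C yw2] /exists_inP[w1 w1C xw1].
have yw1 := meet_v0 w1 x y w1C v0xy xw1.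
have xw2 : x \in val w2 by apply: meet_v0 w2C _ yw2; rewrite v0xy setUC.
have n12 : w1 != w2 by apply: contraNneq xw1 => ->.
case/line_relP: (clq w1 w2 w1C w2C n12) => _ [z zw1 zw2].
have yz : y != z by apply: contraNneq yw2 => ->.
have xz : x != z by apply: contraNneq xw1 => ->.
have eyz := edge_rel e_sym (valP w1) yw1 zw1 yz.
have exz := edge_rel e_sym (valP w2) xw2 zw2 xz.
by case: (tf x y z); rewrite exy eyz exz.
Qed.

Lemma strong_star_edges C c v : strong_clique L C -> {in C, forall w, c \in val w} ->
  c \in val v -> v \in C.
Proof.
move=> /andP[_ /forallP strongC] cC cv; apply: contraT => vC.
have hv : is_matching e [set val v].
  rewrite is_matchingE trivIset1 andbT; apply/forall_inP => S; rewrite inE => /eqP->.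
  exact: valP.
have [M sM hM] := maximal_matching_extend hv.
have hI := maximal_matching_indep hM.
have vI : v \in val @^-1: M by rewrite inE (subsetP sM) // inE.
move: (strongC (val @^-1: M)); rewrite hI => /set0Pn[w]; rewrite inE => /andP[wC wI].
have : L v w by apply/line_relP; split; [apply: contraNneq vC => -> | exists c; rewrite // cC].
by move/is_indepP: (andP hI).1 => /(_ v w vI wI)/negbTE->.
Qed.

End LineGraph.

Section Localizable.
Variables (T : finType) (e : rel T).
Hypotheses (e_sym : symmetric e) (e_irr : irreflexive e).
Local Notation L := (@line_rel T e).
Implicit Types (v : line_vertex e) (C : {set line_vertex e}).

Lemma localizable_equimatchable : localizable L -> equimatchable e.
Proof.
case=> P [hP strongP] M N hM hN.
rewrite -(card_matching_preim (maximal_matching_matching hM)).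
rewrite -(card_matching_preim (maximal_matching_matching hN)).
by rewrite !(card_maximal_indep_strong_partition hP strongP) ?maximal_matching_indep.
Qed.

Lemma localizable_bipartite : triangle_free e -> localizable L -> bipartite e.
Proof.
move=> tf [P [hP strongP]]; have tP := partition_trivIset hP.
have inP v : pblock P v \in P by rewrite pblock_mem // (cover_partition hP) inE.
have memP v : v \in pblock P v by rewrite mem_pblock (cover_partition hP) inE.
pose center C := [pick c : T | [forall v in C, c \in val v]].
have centerP C : C \in P -> exists2 c, center C = Some c & {in C, forall v, c \in val v}.
  move=> hC; rewrite /center; case: pickP => [c /forall_inP|none]; first by exists c.
  have /andP[clq _] := strongP C hC.
  have C0 : C != set0 by case/and3P: hP => _ _; apply: contraNneq => <-.
  have [c cC] := line_clique_star e_sym tf clq C0.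
  by move: (none c) => /forall_inP.
pose A := [set c | [exists C in P, center C == Some c]].
exists A => x y exy.
pose v : line_vertex e := exist _ [set x; y] (is_edge2 exy).
have [c vc cC] := centerP _ (inP v); have cv := cC v (memP v).
have cA : c \in A.
  by rewrite inE; apply/exists_inP; exists (pblock P v); rewrite ?vc.
have notA u : u \in [set x; y] -> u != c -> u \notin A.
  move=> uv uc; rewrite inE; apply/exists_inP => -[C hC /eqP uC].
  have [c' c'C cC'] := centerP _ hC; rewrite uC in c'C; case: c'C => c'u; subst c'.
  have vC : v \in C := strong_star_edges (v := v) (strongP _ hC) cC' uv.
  by move: vc; rewrite (def_pblock tP hC vC) uC => -[cu]; rewrite cu eqxx in uc.
have xy := is_edge2_neq e_irr (is_edge2 exy).
case/set2P: cv => ce; subst c.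
  by rewrite cA (negbTE (notA y _ _)) // ?inE ?eqxx ?orbT // eq_sym.
by rewrite cA (negbTE (notA x _ _)) // ?inE ?eqxx.
Qed.

Lemma bipartite_equimatchable_localizable :
  connected_graph e -> bipartite e -> equimatchable e -> localizable L.
Proof.
move=> hc hb eqm; have [X [hX covX]] := equimatchable_covered_side e_sym e_irr eqm hc hb.
pose f v := [pick a in val v | a \in X].
have fE v a : (Some a == f v) = (a \in val v) && (a \in X).
  rewrite /f; case: pickP => [b /andP[bv bX]|none]; last by rewrite none.
  apply/eqP/andP => [[->]|[av aX]]; first by split.
  congr Some; apply/eqP; apply: contraT => nab.
  by move: (hX _ _ (edge_rel e_sym (valP v) av bv nab)); rewrite aX bX.
have f_ex v : exists2 a, f v = Some a & a \in X.
  case/is_edgeP: (valP v) => x [y [exy vxy]].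
  have [xX|xX] := boolP (x \in X).
    by exists x => //; apply/esym/eqP; rewrite fE vxy !inE eqxx.
  have yX : y \in X by move: (hX _ _ exy); rewrite (negbTE xX); case: (y \in X).
  by exists y => //; apply/esym/eqP; rewrite fE vxy !inE eqxx orbT.
exists (preim_partition f [set: line_vertex e]); split; first exact: preim_partitionP.
move=> _ /imsetP[u _ ->]; have [a fu aX] := f_ex u.
have inB w : (w \in [set w in [set: line_vertex e] | f u == f w]) = (a \in val w).
  by rewrite !inE fu fE aX andbT.
apply/andP; split.
  apply/is_cliqueP => v w; rewrite !inB => av aw nvw.
  by apply/line_relP; split=> //; exists a.
apply/forallP => I; apply/implyP => hI; apply/set0Pn.
have /subsetP/(_ a aX)/bigcupP[_ /imsetP[w wI ->] aw] := covX _ (maximal_indep_matching hI).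
by exists w; rewrite inE inB aw.
Qed.

End Localizable.

Theorem mainTheorem18 (T : finType) (e : rel T)
    (e_sym : symmetric e) (e_irr : irreflexive e)
    (H_conn : connected_graph e) (H_tf : triangle_free e) :
  localizable (@line_rel T e) <-> (bipartite e /\ equimatchable e).
Proof.
split=> [hL|[hb heq]].
  by split; [apply: localizable_bipartite | apply: localizable_equimatchable].
exact: bipartite_equimatchable_localizable.
Qed.
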